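(* Let $V$ be a set of truth values containing distinct elements $1$ and $0$, equipped with a partial order $\leq$ (reflexive, transitive, antisymmetric) such that $0\leq x\leq 1$ for all $x\in V$. Define the order-theoretic truth-relation $\models_{\leq}\subseteq\mathcal{P}(V)\times\mathcal{P}(V)$ by: $\gamma\models_{\leq}\delta$ iff ($\exists x\in\gamma,\exists y\in\delta: x\leq y$) or $0\in\gamma$ or $1\in\delta$. Then $\models_{\leq}$ equals the intersection of all pure consequence relations $\models_{\mathcal{D},\mathcal{D}}$, where $\mathcal{D}$ ranges over the sets of designated values that are upsets for $\leq$.
   Context: A set of designated values is a subset $\mathcal{D}\subseteq V$ with $1\in\mathcal{D}$ and $0\notin\mathcal{D}$. For sets of designated values $\mathcal{D}_p,\mathcal{D}_c$, the mixed consequence truth-relation $\models_{\mathcal{D}_p,\mathcal{D}_c}$ on $\mathcal{P}(V)\times\mathcal{P}(V)$ is defined by $\gamma\models_{\mathcal{D}_p,\mathcal{D}_c}\delta$ iff ($\gamma\subseteq\mathcal{D}_p$ implies $\delta\cap\mathcal{D}_c\neq\emptyset$); it is pure when $\mathcal{D}_p=\mathcal{D}_c$. A set $U\subseteq V$ is an upset for $\leq$ if $x\in U$ and $x\leq y$ imply $y\in U$. *)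

Definition vset (V : Type) := V -> Prop.

Definition designated {V : Type} (one zero : V) (D : vset V) : Prop :=
  D one /\ ~ D zero.

Definition mixed_cons {V : Type} (Dp Dc : vset V) (g d : vset V) : Prop :=
  (forall x, g x -> Dp x) -> exists y, d y /\ Dc y.

Definition pure_cons {V : Type} (D : vset V) (g d : vset V) : Prop :=
  mixed_cons D D g d.

Definition upset {V : Type} (le : V -> V -> Prop) (U : vset V) : Prop :=
  forall x y, U x -> le x y -> U y.

Definition order_cons {V : Type} (le : V -> V -> Prop) (one zero : V)
  (g d : vset V) : Prop :=
  (exists x y, g x /\ d y /\ le x y) \/ g zero \/ d one.

(* Soundness: a designated upset containing all of gamma contains every y
   above some x in gamma, never contains 0, and contains 1.  Completeness:
   if 0 is not in gamma, the upset generated by gamma together with 1 is a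
   designated upset which designates all of gamma; so delta meets it, i.e.
   delta contains 1 or some y above an element of gamma. *)

From Stdlib Require Import Classical.

Section UpClosure.

Variables (V : Type) (le : V -> V -> Prop) (one zero : V).

Lemma pure_cons_of_order_cons (D g d : vset V) :
  designated one zero D -> upset le D ->
  order_cons le one zero g d -> pure_cons D g d.
Proof.
  intros [D_one D_zero] D_up Hcons g_D.
  destruct Hcons as [[x [y [gx [dy le_xy]]]] | [g_zero | d_one]].
  - exists y; split; [exact dy | exact (D_up x y (g_D x gx) le_xy)].
  - exfalso; exact (D_zero (g_D zero g_zero)).
  - exists one; split; assumption.
Qed.

Definition up_closure (g : vset V) : vset V :=
  fun y => y = one \/ exists x, g x /\ le x y.

Lemma sub_up_closure (g : vset V) :
  (forall x, le x x) -> forall x, g x -> up_closure g x.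
Proof.
  intros le_refl x gx; right; exists x; split; [exact gx | apply le_refl].
Qed.

Lemma upset_up_closure (g : vset V) :
  (forall x y z, le x y -> le y z -> le x z) ->
  (forall y, le one y -> y = one) ->
  upset le (up_closure g).
Proof.
  intros le_trans one_max x y [-> | [z [gz le_zx]]] le_xy.
  - left; exact (one_max y le_xy).
  - right; exists z; split; [exact gz | exact (le_trans z x y le_zx le_xy)].
Qed.

Lemma designated_up_closure (g : vset V) :
  one <> zero -> (forall x, le x zero -> x = zero) ->
  ~ g zero -> designated one zero (up_closure g).
Proof.
  intros one_neq_zero zero_min g_zero; split; [left; reflexivity |].
  intros [zero_eq_one | [x [gx le_x0]]].
  - exact (one_neq_zero (eq_sym zero_eq_one)).
  - apply g_zero; rewrite <- (zero_min x le_x0); exact gx.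
Qed.

Lemma order_cons_of_meet_up_closure (g d : vset V) :
  (exists y, d y /\ up_closure g y) -> order_cons le one zero g d.
Proof.
  intros [y [dy [-> | [x [gx le_xy]]]]].
  - right; right; exact dy.
  - left; exists x, y; auto.
Qed.

End UpClosure.

Theorem theorem2p14 (V : Type) (le : V -> V -> Prop) (one zero : V)
  (Hdist : one <> zero)
  (Hrefl : forall x, le x x)
  (Htrans : forall x y z, le x y -> le y z -> le x z)
  (Hanti : forall x y, le x y -> le y x -> x = y)
  (Hbot : forall x, le zero x)
  (Htop : forall x, le x one) :
  forall g d : vset V,
    order_cons le one zero g d <->
    (forall D : vset V, designated one zero D -> upset le D -> pure_cons D g d).
Proof.
  intros g d; split.
  - intros Hcons D D_des D_up.
    eapply pure_cons_of_order_cons; eassumption.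
  - intros Hpure.
    destruct (classic (g zero)) as [g_zero | g_zero]; [right; left; exact g_zero |].
    apply order_cons_of_meet_up_closure.
    apply (Hpure (up_closure _ le one g)).
    + apply designated_up_closure; [exact Hdist | | exact g_zero].
      intros x le_x0; exact (Hanti x zero le_x0 (Hbot x)).
    + apply upset_up_closure; [exact Htrans |].
      intros y le_1y; exact (Hanti y one (Htop y) le_1y).
    + exact (sub_up_closure _ le one g Hrefl).
Qed.
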